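(* Let $b \ge 2$ and $k \ge 1$ be integers, and set $B = b^k$. Let $m\ge 1$ be an integer with $\gcd(m,b)=1$, and let $r$ be an integer with $0\le r<m$. Then there exist infinitely many positive integers $n$ with $n\equiv r \pmod{m}$ such that \[ \mathsf{s}_b(n) \mid n \quad\text{and}\quad \mathsf{s}_B(n) \mid n, \] i.e., infinitely many such $n$ that are simultaneously $b$-Niven and $b^k$-Niven. Moreover, for any $s_0\geq 1$, there exists such an $n$ (positive, $n\equiv r \pmod m$, with $\mathsf{s}_b(n)\mid n$ and $\mathsf{s}_B(n)\mid n$) with $\mathsf{s}_b(n)=\mathsf{s}_B(n)\geq s_0$.
   Context: For an integer base $g\ge 2$ and a positive integer $c$ with base-$g$ expansion $c=\sum_{i=0}^{L} d_i g^i$, $d_i\in\{0,1,\dots,g-1\}$, $d_L\neq 0$, the base-$g$ digit sum is $\mathsf{s}_g(c)=\sum_{i=0}^L d_i$ (and $\mathsf{s}_g(0)=0$). A positive integer $c$ is called $g$-Niven if $\mathsf{s}_g(c)\mid c$. *)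

From mathcomp Require Import all_boot.
Set Implicit Arguments. Unset Strict Implicit. Unset Printing Implicit Defensive.

(* Base-g digit sum, computed with fuel: the fuel c suffices since each step
   divides by g >= 2 (for g <= 1 the function is not meaningful; the theorem
   only uses g >= 2). *)
Fixpoint digsum_aux (fuel g c : nat) : nat :=
  match fuel with
  | 0 => 0
  | fuel'.+1 => if c == 0 then 0 else c %% g + digsum_aux fuel' g (c %/ g)
  end.

Definition digsum (g c : nat) : nat := digsum_aux c g c.

From mathcomp Require Import all_boot.
From mathcomp Require Import cyclic.

Set Implicit Arguments.
Unset Strict Implicit.
Unset Printing Implicit Defensive.

(* Pick s >= s0 with s = r (mod m) and s = 1 (mod b), and let L = m s, which is
   coprime to b.  With t = phi(L), the number n whose base-b^(kt) digits are s
   ones has digit sum s both in base b and in base b^k, because b^(kt) is a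
   power of each base.  By Euler, b^(kt) = 1 (mod L), hence n = s (mod L): so
   n = r (mod m) and s divides n. *)

Lemma digsum_aux_fuel g f1 f2 c : 2 <= g -> c <= f1 -> c <= f2 ->
  digsum_aux f1 g c = digsum_aux f2 g c.
Proof.
move=> g2; elim: f1 f2 c => [|f1 IH] [|f2] c /=; rewrite ?leqn0.
- by [].
- by move=> /eqP ->.
- by move=> _ /eqP ->.
case: eqP => // /eqP c_neq0 c_le c_le'.
have c_gt : c %/ g < c by rewrite ltn_Pdiv // lt0n.
by congr (_ + _); apply: IH; [exact: leq_trans c_gt c_le | exact: leq_trans c_gt c_le'].
Qed.

Lemma digsumE g c : 2 <= g ->
  digsum g c = if c == 0 then 0 else c %% g + digsum g (c %/ g).
Proof.
move=> g2; rewrite /digsum; case: c => [|c] //=.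
congr (_ + _); apply: digsum_aux_fuel => //.
by rewrite -ltnS ltn_Pdiv.
Qed.

Lemma digsum_cons g d w : 2 <= g -> d < g ->
  digsum g (d + g * w) = d + digsum g w.
Proof.
move=> g2 dg; have g0 : 0 < g by apply: leq_trans g2.
have mod_d : (d + g * w) %% g = d by rewrite addnC mulnC modnMDl modn_small.
have div_w : (d + g * w) %/ g = w by rewrite addnC mulnC divnMDl // divn_small // addn0.
rewrite (digsumE _ g2) mod_d div_w addn_eq0 muln_eq0 (gtn_eqF g0) /=.
by case: ifP => // /andP[/eqP-> /eqP->].
Qed.

Lemma digsum_mul_expn g p w : 2 <= g -> digsum g (g ^ p * w) = digsum g w.
Proof.
move=> g2; elim: p => [|p IH]; first by rewrite mul1n.
by rewrite expnS -mulnA -[g * _]add0n digsum_cons ?IH // ltnW.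
Qed.

Fixpoint repunit (B s : nat) : nat := if s is s'.+1 then 1 + B * repunit B s' else 0.

Lemma repunit_gt0 B s : (0 < repunit B s) = (0 < s).
Proof. by case: s. Qed.

Lemma digsum_repunit g p s : 2 <= g -> 0 < p -> digsum g (repunit (g ^ p) s) = s.
Proof.
move=> g2; case: p => // p _; elim: s => [|s IH] /=; first by rewrite digsumE.
by rewrite {1}expnS -mulnA digsum_cons // digsum_mul_expn // IH add1n.
Qed.

Lemma repunit_mod B M s : B = 1 %[mod M] -> repunit B s = s %[mod M].
Proof.
move=> B1; elim: s => [|s IH] //=.
by rewrite -modnDmr -modnMm B1 IH modnMm mul1n modnDmr add1n.
Qed.

Lemma eq_mod_dvd d L x y : d %| L -> x = y %[mod L] -> x = y %[mod d].
Proof. by move=> dL; rewrite -(modn_dvdm x dL) -(modn_dvdm y dL) => ->. Qed.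

Lemma exists_large_coprime_residue m b r N : 0 < m -> 0 < b -> coprime m b ->
  exists s, [/\ N < s, s = r %[mod m] & coprime s b].
Proof.
move=> m0 b0 cmb; pose x := chinese m b r 1.
exists (N.+1 * (m * b) + x); split.
- by rewrite ltn_addr // leq_pmulr // muln_gt0 m0.
- by rewrite mulnA mulnAC modnMDl chinese_modl.
- by rewrite -coprime_modl mulnA modnMDl chinese_modr // coprime_modl coprime1n.
Qed.

Lemma exists_double_niven_of_digsum b k m s : 2 <= b -> 0 < k -> 0 < m -> 0 < s ->
  coprime m b -> coprime s b ->
  exists2 n, 0 < n &
    [/\ n = s %[mod m], s %| n, digsum b n = s & digsum (b ^ k) n = s].
Proof.
move=> b2 k0 m0 s0 cmb csb; pose L := m * s.
have cbL : coprime b L by rewrite coprimeMr !(coprime_sym b) cmb csb.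
pose t := totient L.
have t0 : 0 < t by rewrite totient_gt0 muln_gt0 m0.
have B1 : (b ^ k) ^ t = 1 %[mod L] by apply: Euler_exp_totient; rewrite coprimeXl.
have nL := repunit_mod s B1.
exists (repunit ((b ^ k) ^ t) s); first by rewrite repunit_gt0.
split.
- exact: eq_mod_dvd (dvdn_mulr s (dvdnn m)) nL.
- by rewrite /dvdn (eq_mod_dvd (dvdn_mull m (dvdnn s)) nL) modnn.
- by rewrite -expnM digsum_repunit // muln_gt0 k0.
- by rewrite digsum_repunit // (leq_trans b2 (leq_pexp2l (ltnW b2) k0)).
Qed.

Lemma exists_double_niven_in_class b k m r N : 2 <= b -> 0 < k -> 0 < m ->
  coprime m b ->
  exists2 n, 0 < n & [/\ n = r %[mod m], digsum b n %| n,
                         digsum (b ^ k) n = digsum b n & N < digsum b n].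
Proof.
move=> b2 k0 m0 cmb.
have [s [Ns sr csb]] := exists_large_coprime_residue r N m0 (ltnW b2) cmb.
have [n n0 [ns sn dsb dsbk]] :=
  exists_double_niven_of_digsum b2 k0 m0 (leq_ltn_trans (leq0n N) Ns) cmb csb.
by exists n; rewrite // dsb dsbk ns sr.
Qed.

Theorem theorem1p1 (b k m r : nat) :
  2 <= b -> 1 <= k -> 1 <= m -> coprime m b -> r < m ->
  (forall N : nat, exists n : nat,
      N < n /\ 0 < n /\ n = r %[mod m] /\
      digsum b n %| n /\ digsum (b ^ k) n %| n) /\
  (forall s0 : nat, 1 <= s0 -> exists n : nat,
      0 < n /\ n = r %[mod m] /\
      digsum b n %| n /\ digsum (b ^ k) n %| n /\
      digsum b n = digsum (b ^ k) n /\ s0 <= digsum b n).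
Proof.
move=> b2 k1 m1 cmb _; split=> [N | s0 _].
- have [n n0 [nr dvd_n eq_ds Nlt]] := exists_double_niven_in_class r N b2 k1 m1 cmb.
  exists n; rewrite eq_ds; do !split=> //.
  exact: leq_trans Nlt (dvdn_leq n0 dvd_n).
- have [n n0 [nr dvd_n eq_ds s0lt]] := exists_double_niven_in_class r s0 b2 k1 m1 cmb.
  by exists n; rewrite eq_ds; do !split=> //; apply: ltnW.
Qed.
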